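(* Let $N\ge3$ and $G\in\mathcal G_3(N)$. If $s=(x^1,\dots,x^{N-1},u,N)\in S^N\cap S_{nc}$ satisfies $c(G|s)=1$ (and hence has the sure-capture property), then: (1) $|N(u)|=1$, i.e. $u$ is a leaf of $G$; and (2) if $N(u)=\{v\}$, then $c(G|s')=\infty$ for every state $s'=(y^1,\dots,y^{N-1},v,N)\in S^N\cap S_{nc}$.
   Context: Board and moves: $G=(V,E)$ finite, simple, connected, undirected; $N(u)$ is the open neighbourhood of $u$. There are $N\ge3$ tokens, cops $C_1,\dots,C_{N-1}$ (tokens $1,\dots,N-1$) and robber $R$ (token $N$). A state is $s=(x^1,\dots,x^N,n)$ with $x^i\in V$ the position of token $i$ and $n$ the token to move; $S^n$ is the set of states with token $n$ to move; $s$ is a capture state if $x^i=x^N$ for some $i\le N-1$, and $S_{nc}$ is the set of noncapture states. In each turn the token to move moves to a vertex of its closed neighbourhood (may stay put); order $C_1,\dots,C_{N-1},R,C_1,\dots$; the game ends at the first capture. The modified cops-and-robber (CR) game is the two-player zero-sum game where one player controls all cops, the other the robber, and if capture occurs at time $t$ (number of turns) the robber's payoff is $-\gamma^t$ ($0$ if never), $\gamma\in(0,1)$. $\widehat\Sigma^n$ denotes the set of pure positional strategies of token $n$ that are components of optimal strategies in this game (CR-optimal strategies). For $s\in S_{nc}$, whenever CR-optimal play from $s$ leads to capture, it is always the same cop, denoted $\widehat C(s)$, that effects it. State cop number. For $s\in S_{nc}$, $c(G|s)=c_N(G|s)$ is the minimum $k\in\{1,\dots,N-1\}$ for which there exist $k$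 cops and strategies for them such that, starting from $s$, a capture (by any cop) occurs whatever the other $N-k$ tokens (including $R$) do; $c(G|s)=\infty$ if no such $k$ exists. $c(G)$ is the classical cop number of $G$. Graph classes. $\mathcal G(N)=\{G: c(G)>N-1\}$; $\mathcal G_1(N)=\{G\in\mathcal G(N):\exists s\in S_{nc}\text{ with } c(G|s)\in\{2,\dots,N-1\}\}$; $\mathcal G_1'(N)=\mathcal G(N)\setminus\mathcal G_1(N)$; $\mathcal G_2(N)=\{G\in\mathcal G(N): c(G|s)=\infty\text{ for all } s\in S^N\cap S_{nc}\}$; $\mathcal G_2'(N)=\mathcal G_1'(N)\setminus\mathcal G_2(N)$. Say that a state $s\in S_{nc}$ with $c(G|s)=1$ and $\widehat C(s)=C_m$ has the sure-capture property if for every $\widehat\sigma^m\in\widehat\Sigma^m$ and every strategy profile $\sigma^{-m}$ of the other tokens, play from $s$ under $(\widehat\sigma^m,\sigma^{-m})$ ends in a capture in which $C_m$ is on the robber's vertex. $\mathcal G_3(N)$ is the set of $G\in\mathcal G_2'(N)$ in which every $s\in S_{nc}$ with $c(G|s)=1$ has the sure-capture property. *)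

From HB Require Import structures.
From mathcomp Require Import all_boot all_order all_algebra.
From Stdlib Require Import Classical ClassicalEpsilon.
Set Implicit Arguments. Unset Strict Implicit. Unset Printing Implicit Defensive.
Import Order.TTheory GRing.Theory Num.Theory.

Section CR.
Variable N : nat.          (* number of tokens *)
Variable V : finType.
Variable adj : rel V.

(* tokens 0..N-1 (paper's tokens 1..N); the robber is the last token *)
Definition Tok := 'I_(N.-1).+1.
Definition robber : Tok := ord_max.
Definition is_cop (i : Tok) : bool := i != robber.

(* positions of all tokens, and states = (positions, token to move) *)
Definition Pos := {ffun Tok -> V}.
Definition State := (Pos * Tok)%type.

Definition closedN (x y : V) : bool := (y == x) || adj x y.

Definition nextTok (n : Tok) : Tok := if n == robber then ord0 else inord n.+1.

Definition is_capture (s : State) : bool :=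
  [exists i : Tok, is_cop i && (s.1 i == s.1 robber)].
Definition noncapture (s : State) : bool := ~~ is_capture s.

Definition legal_step (s s' : State) : Prop :=
  [/\ s'.2 = nextTok s.2,
      (forall i, i != s.2 -> s'.1 i = s.1 i) &
      closedN (s.1 s.2) (s'.1 s.2)].

(* pure positional strategies (token n's strategy is used only when n moves) *)
Definition strat := Pos -> V.
Definition valid_strat (n : Tok) (f : strat) : Prop := forall p : Pos, closedN (p n) (f p).
Definition Profile := Tok -> strat.
Definition valid_profile (sg : Profile) : Prop := forall n, valid_strat n (sg n).
Definition mix (sg tau : Profile) (A : pred Tok) : Profile :=
  fun n => if A n then tau n else sg n.

Definition step (sg : Profile) (s : State) : State :=
  ([ffun i => if i == s.2 then sg s.2 s.1 else s.1 i], nextTok s.2).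
Definition play (sg : Profile) (s : State) (t : nat) : State := iter t (step sg) s.

Definition captures (sg : Profile) (s : State) : Prop :=
  exists t, is_capture (play sg s t).
Definition first_capture (sg : Profile) (s : State) (t : nat) : Prop :=
  is_capture (play sg s t) /\ forall t', t' < t -> ~~ is_capture (play sg s t').

Section Payoff.
Variable R : realFieldType.
Variable gamma : R.

(* cops' payoff gamma^t if capture first occurs at time t, 0 if never;
   the robber's payoff is its negative (zero-sum) *)
Definition payoff (sg : Profile) (s : State) : R :=
  match excluded_middle_informative (captures sg s) with
  | left H => gamma ^+ (ex_minn H)
  | right _ => 0
  end.

(* optimal strategies of the two-player zero-sum game (cops team vs robber):
   saddle points, uniformly in the initial state *)
Definition optimal_profile (sg : Profile) : Prop :=
  valid_profile sg /\
  forall (s : State) (tau : Profile), valid_profile tau ->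
    (payoff (mix sg tau is_cop) s <= payoff sg s)%R /\
    (payoff sg s <= payoff (mix sg tau (pred1 robber)) s)%R.

Definition hatSigma (n : Tok) (f : strat) : Prop :=
  exists sg, optimal_profile sg /\ sg n =1 f.

Definition hatC (s : State) (m : Tok) : Prop :=
  is_cop m /\ exists sg, optimal_profile sg /\
    exists t, first_capture sg s t /\ (play sg s t).1 m = (play sg s t).1 robber.

Definition sure_capture (s : State) : Prop :=
  forall m, hatC s m ->
  forall f, hatSigma m f ->
  forall sg, valid_profile sg ->
    let sg' := mix sg (fun _ => f) (pred1 m) in
    exists t, first_capture sg' s t /\ (play sg' s t).1 m = (play sg' s t).1 robber.
End Payoff.

Definition legal_play (f : nat -> State) (s : State) : Prop :=
  f 0 = s /\ forall t, legal_step (f t) (f t.+1).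

Definition force (s : State) (k : nat) : Prop :=
  exists K : {set Tok},
    [/\ K \subset [set i | is_cop i], #|K| = k &
      exists sg : Profile, (forall i, i \in K -> valid_strat i (sg i)) /\
        forall f, legal_play f s ->
          (forall t, (f t).2 \in K -> (f t.+1).1 (f t).2 = sg (f t).2 (f t).1) ->
          exists t, is_capture (f t)].

Definition scn_eq (s : State) (k : nat) : Prop :=
  [/\ 1 <= k <= N.-1, force s k & forall j, 1 <= j < k -> ~ force s j].
Definition scn_inf (s : State) : Prop :=
  forall k, 1 <= k <= N.-1 -> ~ force s k.

(* classical cops and robber with k cops: cops place, robber places, then
   cops (all simultaneously) and robber alternate *)
Definition classical_cops_win (k : nat) : Prop :=
  exists (c0 : {ffun 'I_k -> V}) (sg : {ffun 'I_k -> V} -> V -> {ffun 'I_k -> V}),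
    (forall (c : {ffun 'I_k -> V}) (r : V) (i : 'I_k), closedN (c i) (sg c r i)) /\
    forall (c : nat -> {ffun 'I_k -> V}) (r : nat -> V),
      c 0 = c0 -> (forall t, c t.+1 = sg (c t) (r t)) ->
      (forall t, closedN (r t) (r t.+1)) ->
      exists t (i : 'I_k), c t i = r t \/ c t.+1 i = r t.

Definition in_G : Prop := forall k, k <= N.-1 -> ~ classical_cops_win k.
Definition in_G1 : Prop :=
  in_G /\ exists s, noncapture s /\ exists k, 2 <= k /\ scn_eq s k.
Definition in_G1' : Prop := in_G /\ ~ in_G1.
Definition in_G2 : Prop :=
  in_G /\ forall s : State, s.2 = robber -> noncapture s -> scn_inf s.
Definition in_G2' : Prop := in_G1' /\ ~ in_G2.
Definition in_G3 (R : realFieldType) (gamma : R) : Prop :=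
  in_G2' /\ forall s, noncapture s -> scn_eq s 1 -> sure_capture gamma s.

End CR.

From Pilot Require Import Defs.
From HB Require Import structures.
From mathcomp Require Import all_boot all_order all_algebra.
From Stdlib Require Import Classical ClassicalEpsilon.
Import Order.TTheory GRing.Theory Num.Theory.
Set Implicit Arguments. Unset Strict Implicit. Unset Printing Implicit Defensive.

(* Optimal strategies of the discounted game exist: by backward induction the cops move
   so as to capture as early as possible and the robber so as to delay capture.  Hence in a
   state of cop number 1 some cop is the designated capturer, and the sure-capture property
   puts every cop adjacent to the robber on that cop's vertex; otherwise the robber would
   step onto a different cop.

   Now let one cop k force capture from a state where the robber, at u, is to move, and
   follow the play in which only k moves.  Every y in N[u] is occupied by a cop, or lies in
   N[x] where x is k's vertex, or else the robber can go to y and stay there for a round;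
   since k still wins, induction over k's winning strategy shows that y is a leaf.  Taking
   y = u gives x ~ u, and a cop on a neighbour of u sits on x, so every neighbour of u lies
   in N[x] or is a leaf.  A second neighbour w of u is impossible: with one cop on w and
   all others on x, a single cop wins by going to u and then into the leaf the robber fled
   to, yet two cops adjacent to the robber sit on different vertices.  Thus u is a leaf.
   Since G is not in G_1(N), a state with the robber at the neighbour v of u has cop number
   1 or infinity; if 1, v is a leaf too, so G is a single edge and one cop wins the
   classical game, contradicting c(G) > N - 1. *)

Lemma exists_max_total (T : finType) (r : T -> T -> Prop) (A : pred T) x0 :
  (forall a b c, r a b -> r b c -> r a c) -> (forall a b, r a b \/ r b a) ->
  A x0 -> exists2 v, A v & forall w, A w -> r w v.
Proof.
move=> rtrans rtotal Ax0.
have rrefl a : r a a by case: (rtotal a a).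
suff [v vA vmax] : exists2 v, (v == x0) || (v \in enum A) &
    forall w, (w == x0) || (w \in enum A) -> r w v.
  exists v => [|w Aw]; last by apply: vmax; rewrite mem_enum; apply/orP; right.
  by move: vA; rewrite mem_enum => /orP[/eqP->|].
elim: (enum A) => [|a l [v vl vmax]].
  by exists x0 => [|w]; rewrite ?eqxx // in_nil orbF => /eqP->.
have [rva|rav] := rtotal v a.
  exists a => [|w]; first by rewrite inE eqxx orbT.
  by rewrite inE orbCA => /orP[/eqP->//|/vmax rwv]; apply: rtrans rwv rva.
exists v => [|w]; first by rewrite inE orbCA vl orbT.
by rewrite inE orbCA => /orP[/eqP->//|]; apply: vmax.
Qed.

Definition sooner (T : Type) (c : nat -> T -> bool) (a b : T) := forall k, c k b -> c k a.

Lemma sooner_total (T : Type) (c : nat -> T -> bool) :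
  (forall m n t, m <= n -> c m t -> c n t) -> forall a b, sooner c a b \/ sooner c b a.
Proof.
move=> c_mono a b; case: (classic (sooner c a b)) => [|not_ab]; first by left.
right=> k cka; have [k0 [ck0b nck0a]] : exists k0, c k0 b /\ ~~ c k0 a.
  apply: NNPP => nex; apply: not_ab => k1 ck1b; apply: NNPP => nck1a.
  by apply: nex; exists k1; split => //; apply/negP.
apply: (c_mono k0) ck0b; rewrite leqNgt; apply: contra nck0a => lt_k_k0.
exact: (c_mono k) (ltnW lt_k_k0) cka.
Qed.

Section Game.
Variables (N : nat) (V : finType) (adj : rel V).
Local Notation State := (State N V).
Local Notation Profile := (Profile N V).
Local Notation robber := (robber N).
Local Notation closedN := (closedN adj).

Definition move_to (s : State) (v : V) : State :=
  ([ffun i => if i == s.2 then v else s.1 i], nextTok s.2).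

Lemma move_toE (s : State) v i : (move_to s v).1 i = if i == s.2 then v else s.1 i.
Proof. by rewrite ffunE. Qed.

Lemma step_move_to (sg : Profile) s : step sg s = move_to s (sg s.2 s.1).
Proof. by []. Qed.

Lemma playS (sg : Profile) s t : play sg s t.+1 = play sg (step sg s) t.
Proof. by rewrite /play iterSr. Qed.

Lemma playSr (sg : Profile) s t : play sg s t.+1 = step sg (play sg s t).
Proof. by rewrite /play iterS. Qed.

Lemma closedN_refl x : closedN x x.
Proof. by rewrite /Defs.closedN eqxx. Qed.

Lemma legal_move_to (s : State) v : closedN (s.1 s.2) v -> legal_step adj s (move_to s v).
Proof. by move=> sv; split=> // [i /negbTE ni|]; rewrite move_toE ?ni ?eqxx. Qed.

Lemma legal_stepE (s s' : State) : legal_step adj s s' -> s' = move_to s (s'.1 s.2).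
Proof.
case: s' => p' n' [/= -> p'E _]; rewrite /move_to; congr pair; apply/ffunP => i.
by rewrite ffunE; case: eqP => [->|/eqP /p'E].
Qed.

Lemma legal_play_of (sg : Profile) s : valid_profile adj sg -> legal_play adj (play sg s) s.
Proof.
by move=> sg_valid; split=> // t; rewrite playSr step_move_to; apply/legal_move_to/sg_valid.
Qed.

Lemma mix_valid (sg tau : Profile) A :
  valid_profile adj sg -> valid_profile adj tau -> valid_profile adj (mix sg tau A).
Proof. by move=> sg_valid tau_valid n; rewrite /mix; case: (A n). Qed.

Lemma captureP (q : State) :
  reflect (exists2 c, is_cop c & q.1 c = q.1 robber) (is_capture q).
Proof.
apply: (iffP existsP) => [[c /andP[cop_c /eqP]]|[c cop_c qc]]; first by exists c.
by exists c; rewrite cop_c qc eqxx.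
Qed.

Fixpoint cops_win_within (n : nat) (s : State) : bool :=
  is_capture s ||
  if n is n'.+1 then
    if is_cop s.2 then [exists v, closedN (s.1 s.2) v && cops_win_within n' (move_to s v)]
    else [forall v, closedN (s.1 s.2) v ==> cops_win_within n' (move_to s v)]
  else false.

Lemma cops_win_within_le m n s : m <= n -> cops_win_within m s -> cops_win_within n s.
Proof.
have succ k q : cops_win_within k q -> cops_win_within k.+1 q.
  elim: k q => [|k IH] q /=; first by rewrite orbF => ->.
  case/orP=> [->//|]; case: ifP => _ win; apply/orP; right.
    by case/existsP: win => v /andP[qv win]; apply/existsP; exists v; rewrite qv; apply: IH.
  by apply/forallP => v; apply/implyP => /(implyP (forallP win v)); apply: IH.
by move=> /subnK <-; elim: (n - m) => // d IH win; apply/succ/IH.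
Qed.

Definition best_move_spec (s : State) (v : V) : Prop :=
  closedN (s.1 s.2) v /\
  forall w, closedN (s.1 s.2) w ->
    if is_cop s.2 then sooner cops_win_within (move_to s v) (move_to s w)
    else sooner cops_win_within (move_to s w) (move_to s v).

Definition best_move (s : State) : V := epsilon (inhabits (s.1 s.2)) (best_move_spec s).

Lemma best_moveP (s : State) : best_move_spec s (best_move s).
Proof.
apply: epsilon_spec; set r := fun v w => sooner cops_win_within (move_to s v) (move_to s w).
have r_trans a b c : r a b -> r b c -> r a c by move=> rab rbc k /rbc /rab.
have r_total a b : r a b \/ r b a by apply: sooner_total; apply: cops_win_within_le.
have [v sv vmax] := exists_max_total r_trans r_total (closedN_refl (s.1 s.2)).
have [v' sv' vmin] := @exists_max_total _ (fun v w => r w v) _ _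
  (fun a b c rba rcb => r_trans c b a rcb rba) (fun a b => r_total b a)
  (closedN_refl (s.1 s.2)).
by rewrite /best_move_spec; case: (is_cop s.2); [exists v' | exists v].
Qed.

Definition opt_profile : Profile := fun n p => best_move (p, n).

Lemma opt_profile_valid : valid_profile adj opt_profile.
Proof. by move=> n p; case: (best_moveP (p, n)). Qed.

Lemma opt_cops_capture_within (sg : Profile) : valid_profile adj sg ->
  (forall n, is_cop n -> sg n = opt_profile n) ->
  forall k s, cops_win_within k s -> exists2 t, t <= k & is_capture (play sg s t).
Proof.
move=> sg_valid sg_cops; elim=> [|k IH] [p n] /=; first by rewrite orbF => cap; exists 0.
case/orP=> [cap|win]; first by exists 0.
suff /IH[t le_tk cap] : cops_win_within k (step sg (p, n)).
  by exists t.+1; rewrite // playS.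
rewrite step_move_to /=; move: win; case: ifP => cop_n win.
  have [_ /= best] := best_moveP (p, n); rewrite cop_n in best.
  by case/existsP: win => v /andP[pv]; rewrite sg_cops //; apply: best.
exact: (implyP (forallP win _) (sg_valid n p)).
Qed.

Lemma cops_win_within_of_opt_robber (sg : Profile) : valid_profile adj sg ->
  (forall n, ~~ is_cop n -> sg n = opt_profile n) ->
  forall k s, is_capture (play sg s k) -> cops_win_within k s.
Proof.
move=> sg_valid sg_rob; elim=> [|k IH] [p n]; first by move=> /= ->.
rewrite playS => /IH; rewrite step_move_to /= => win; apply/orP; right.
case: ifPn => cop_n; first by apply/existsP; exists (sg n p); rewrite sg_valid.
rewrite sg_rob // in win; have [_ /= best] := best_moveP (p, n).
by apply/forallP => v; apply/implyP => pv; move: (best v pv); rewrite (negbTE cop_n); apply.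
Qed.

End Game.

Section Payoff.
Local Open Scope ring_scope.
Variables (N : nat) (V : finType) (adj : rel V) (R : realFieldType) (gamma : R).
Hypotheses (gamma_ge0 : 0 <= gamma) (gamma_le1 : gamma <= 1).
Local Notation State := (State N V).
Local Notation Profile := (Profile N V).

Variant payoff_spec (sg : Profile) (s : State) : R -> Prop :=
  | PayoffCapture t of first_capture sg s t : payoff_spec sg s (gamma ^+ t)
  | PayoffNoCapture of (forall t, ~~ is_capture (play sg s t)) : payoff_spec sg s 0.

Lemma payoffP (sg : Profile) s : payoff_spec sg s (payoff gamma sg s).
Proof.
rewrite /payoff; case: excluded_middle_informative => [cap|nocap].
  case: (ex_minnP cap) => t capt tmin; apply: PayoffCapture; split=> // t' lt_t't.
  by apply/negP => /tmin; rewrite leqNgt lt_t't.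
by apply: PayoffNoCapture => t; apply/negP => capt; apply: nocap; exists t.
Qed.

Lemma payoff_ge0 (sg : Profile) s : 0 <= payoff gamma sg s.
Proof. by case: payoffP => // t _; apply: exprn_ge0. Qed.

Lemma payoff_ge_capture (sg : Profile) s t :
  is_capture (play sg s t) -> gamma ^+ t <= payoff gamma sg s.
Proof.
move=> capt; case: payoffP => [t0 [_ before]|nocap]; last by rewrite (negbTE (nocap t)) in capt.
by apply: ler_wiXn2l => //; rewrite leqNgt; apply/negP => /before; rewrite capt.
Qed.

Lemma payoff_opt_robber_le_opt_cops (sgR sgC : Profile) s :
  valid_profile adj sgR -> (forall n, ~~ is_cop n -> sgR n = opt_profile adj n) ->
  valid_profile adj sgC -> (forall n, is_cop n -> sgC n = opt_profile adj n) ->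
  payoff gamma sgR s <= payoff gamma sgC s.
Proof.
move=> sgR_valid sgR_opt sgC_valid sgC_opt.
case: (payoffP sgR s) => [t [capt _]|_]; last exact: payoff_ge0.
have win_t := cops_win_within_of_opt_robber sgR_valid sgR_opt capt.
have [t' le_t't capt'] := opt_cops_capture_within sgC_valid sgC_opt win_t.
exact: le_trans (ler_wiXn2l _ _ le_t't) (payoff_ge_capture capt').
Qed.

Lemma opt_profile_optimal : optimal_profile adj gamma (@opt_profile N V adj).
Proof.
have opt_valid := @opt_profile_valid N V adj.
split=> // s tau tau_valid; split; apply: payoff_opt_robber_le_opt_cops => //;
  try exact: mix_valid.
- by move=> n /negbTE rob_n; rewrite /mix rob_n.
- by move=> n /negbTE cop_n; rewrite /mix /= cop_n.
Qed.

End Payoff.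

Section OneCop.
Variables (N : nat) (V : finType) (adj : rel V).
Local Notation State := (State N V).
Local Notation Profile := (Profile N V).
Local Notation Tok := (Tok N).

Definition solo (k : Tok) (sig : strat N V) : Profile :=
  fun n p => if n == k then sig p else p n.

Lemma solo_valid k sig : valid_strat adj k sig -> valid_profile adj (solo k sig).
Proof. by move=> sig_valid n p; rewrite /solo; case: eqP => [->|_]; last exact: closedN_refl. Qed.

Inductive wins (k : Tok) (sig : strat N V) : State -> Prop :=
  | wins_capture s of is_capture s : wins k sig s
  | wins_move s of ~~ is_capture s & s.2 = k & wins k sig (move_to s (sig s.1)) :
      wins k sig s
  | wins_other s of ~~ is_capture s & s.2 <> k &
      (forall s', legal_step adj s s' -> wins k sig s') : wins k sig s.

Definition follows (k : Tok) (sig : strat N V) (f : nat -> State) :=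
  forall t, (f t).2 = k -> (f t.+1).1 k = sig (f t).1.

Lemma wins_captures k sig s : wins k sig s ->
  forall f, legal_play adj f s -> follows k sig f -> exists t, is_capture (f t).
Proof.
elim=> {s} [s cap|s _ s_k _ IH|s _ _ _ IH] f [f0 f_legal] f_sig; first by exists 0; rewrite f0.
  have f1 : f 1 = move_to s (sig s.1).
    by rewrite (legal_stepE (f_legal 0)) f0 s_k (f_sig 0) ?f0.
  have [t cap] : exists t, is_capture (f t.+1).
    by apply: IH => [|t]; [split=> // t; apply: f_legal | apply: f_sig].
  by exists t.+1.
have s_f1 : legal_step adj s (f 1) by rewrite -f0; apply: f_legal.
have [t cap] : exists t, is_capture (f t.+1).
  by apply: (IH _ s_f1) => [|t]; [split=> // t; apply: f_legal | apply: f_sig].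
by exists t.+1.
Qed.

Lemma captures_wins k sig s : valid_strat adj k sig ->
  (forall f, legal_play adj f s -> follows k sig f -> exists t, is_capture (f t)) ->
  wins k sig s.
Proof.
move=> sig_valid captures; apply: NNPP => lose_s.
pose next (q : State) : State := if q.2 == k then move_to q (sig q.1)
  else epsilon (inhabits q) (fun q' => legal_step adj q q' /\ ~ wins k sig q').
have next_loses q : ~ wins k sig q ->
    [/\ ~~ is_capture q, legal_step adj q (next q) & ~ wins k sig (next q)].
  move=> lose_q; have q_nc : ~~ is_capture q.
    by apply/negP => cap; apply/lose_q/wins_capture.
  rewrite /next; case: eqP => q_k.
    split=> //; first by apply: legal_move_to; rewrite q_k; apply: sig_valid.
    by move=> win; apply/lose_q/wins_move.
  have escape : exists q', legal_step adj q q' /\ ~ wins k sig q'.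
    apply: NNPP => no_escape; apply: lose_q; apply: wins_other => // q' q_q'.
    by apply: NNPP => lose_q'; apply: no_escape; exists q'.
  by have [] := epsilon_spec (inhabits q) _ escape; split.
pose f t := iter t next s.
have f_loses t : ~ wins k sig (f t).
  by elim: t => // t IH; rewrite /f iterS; case: (next_loses _ IH).
have [t cap] : exists t, is_capture (f t).
  apply: captures => [|t f_k]; last by rewrite /f iterS /next -/(f t) f_k eqxx move_toE f_k eqxx.
  by split=> // t; rewrite /f iterS; case: (next_loses _ (f_loses t)).
by case: (next_loses _ (f_loses t)); rewrite cap.
Qed.

Lemma force1P s : force adj s 1 <->
  exists k sig, [/\ is_cop k, valid_strat adj k sig & wins k sig s].
Proof.
split=> [[K [K_cops /eqP/cards1P[k K_k] [sg [sg_valid captures]]]]|].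
  have k_K : k \in K by rewrite K_k set11.
  exists k, (sg k); split; [by move: (subsetP K_cops k k_K); rewrite inE | exact: sg_valid |].
  apply: captures_wins (sg_valid k k_K) _ => f f_legal f_sig; apply: captures => // t.
  by rewrite K_k inE => /eqP t_k; rewrite t_k (f_sig t t_k).
case=> k [sig [cop_k sig_valid win]]; exists [set k].
split; [by rewrite sub1set inE | exact: cards1 |].
exists (fun _ => sig); split=> [i|f f_legal f_sig]; first by rewrite inE => /eqP ->.
by apply: (wins_captures win f_legal) => t t_k; move: (f_sig t); rewrite t_k inE eqxx; apply.
Qed.

End OneCop.

Lemma scn_eq1 (N : nat) (V : finType) (adj : rel V) (s : State N V) :
  0 < N.-1 -> force adj s 1 -> scn_eq adj s 1.
Proof. by move=> cops force1; split=> // j /andP[le1j]; rewrite ltnNge le1j. Qed.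

Section SureCapture.
Variables (N : nat) (V : finType) (adj : rel V) (R : realFieldType) (gamma : R).
Hypothesis gamma01 : (0 < gamma < 1)%R.
Local Notation State := (State N V).
Local Notation robber := (robber N).
Local Notation closedN := (closedN adj).

Lemma hatC_of_force1 (s : State) : force adj s 1 -> exists m, hatC adj gamma s m.
Proof.
case/force1P=> k [sig [cop_k sig_valid win]].
have [gamma_gt0 gamma_lt1] := andP gamma01.
have [gamma_ge0 gamma_le1] := (ltW gamma_gt0, ltW gamma_lt1).
have [opt_valid opt] := @opt_profile_optimal N V adj R gamma gamma_ge0 gamma_le1.
set sg0 := opt_profile adj in opt_valid opt *.
set sgk := mix sg0 (solo k sig) (@is_cop N).
have [t capt] : exists t, is_capture (play sgk s t).
  have sgk_valid : valid_profile adj sgk by apply/mix_valid/solo_valid.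
  apply: (wins_captures win (legal_play_of s sgk_valid)) => t t_k.
  by rewrite playSr step_move_to move_toE t_k eqxx /sgk /mix cop_k /solo eqxx.
have payoff_gt0 : (0 < payoff gamma sg0 s)%R.
  have [le_sgk _] := opt s (solo k sig) (solo_valid sig_valid).
  apply: lt_le_trans (exprn_gt0 t gamma_gt0) (le_trans _ le_sgk).
  exact: payoff_ge_capture capt.
case: (payoffP gamma sg0 s) payoff_gt0 => [t0 first0 _|_]; last by rewrite ltxx.
have /captureP[m cop_m meet] := first0.1.
by exists m; split=> //; exists sg0; split=> //; exists t0.
Qed.

Lemma adjacent_cop_at_capturer (s : State) m i : s.2 = robber -> noncapture s ->
  sure_capture adj gamma s -> hatC adj gamma s m -> is_cop i ->
  adj (s.1 robber) (s.1 i) -> s.1 i = s.1 m.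
Proof.
move=> s_rob s_nc sure hatCm cop_i adj_i; have [cop_m [sg [sg_opt _]]] := hatCm.
pose to_i (p : Pos N V) := if closedN (p robber) (s.1 i) then s.1 i else p robber.
have to_i_valid : valid_profile adj (solo robber to_i).
  by apply: solo_valid => p; rewrite /to_i; case: ifP => // _; apply: closedN_refl.
have sg_m : hatSigma adj gamma m (sg m) by exists sg.
have [t [[capt before] meet]] := sure m hatCm (sg m) sg_m _ to_i_valid.
set sg' := mix _ _ _ in capt before meet.
(* The robber steps onto cop i, so capture happens at once while m has not moved. *)
have play1 : play sg' s 1 = move_to s (s.1 i).
  rewrite /play /= step_move_to s_rob /sg' /mix /= eq_sym (negbTE cop_m) /solo eqxx.
  by rewrite /to_i /Defs.closedN adj_i orbT.
have cap1 : is_capture (play sg' s 1).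
  by rewrite play1; apply/captureP; exists i; rewrite // !move_toE s_rob eqxx (negbTE cop_i).
have t1 : t = 1.
  case: t capt before meet => [|[|t]] capt before meet //.
    by case/negP: s_nc.
  by move: (before 1 isT); rewrite cap1.
by move: meet; rewrite t1 play1 !move_toE s_rob eqxx (negbTE cop_m) => ->.
Qed.

Hypothesis cops_exist : 0 < N.-1.
Hypothesis sure_at_scn1 :
  forall s : State, noncapture s -> scn_eq adj s 1 -> sure_capture adj gamma s.

Lemma adjacent_cops_coincide (s : State) i j : s.2 = robber -> noncapture s ->
  force adj s 1 -> is_cop i -> is_cop j ->
  adj (s.1 robber) (s.1 i) -> adj (s.1 robber) (s.1 j) -> s.1 i = s.1 j.
Proof.
move=> s_rob s_nc force1 cop_i cop_j adj_i adj_j.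
have sure := sure_at_scn1 s_nc (scn_eq1 cops_exist force1).
have [m hatCm] := hatC_of_force1 force1.
by rewrite (adjacent_cop_at_capturer s_rob s_nc sure hatCm cop_i adj_i)
  (adjacent_cop_at_capturer s_rob s_nc sure hatCm cop_j adj_j).
Qed.

End SureCapture.

Lemma nextTok_robber N : nextTok (robber N) = ord0.
Proof. by rewrite /nextTok eqxx. Qed.

Lemma val_nextTok N (n : Tok N) : n != robber N -> val (nextTok n) = (val n).+1.
Proof.
move=> n_nrob; rewrite /nextTok (negbTE n_nrob) /= inordK // ltnS ltn_neqAle leq_ord andbT.
by apply: contra n_nrob => /eqP n_max; apply/eqP/val_inj.
Qed.

Lemma ord0_cop N : 2 < N -> is_cop (ord0 : Tok N).
Proof. by case: N => [|[|[|n]]]. Qed.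

Definition leafy (V : finType) (adj : rel V) (u : V) := forall a b, adj u a -> adj u b -> a = b.

Section SoloRound.
Variables (N : nat) (V : finType) (adj : rel V) (k : Tok N) (sig : strat N V).
Hypotheses (cop_k : is_cop k) (sig_valid : valid_strat adj k sig).
Local Notation State := (State N V).
Local Notation robber := (robber N).
Local Notation closedN := (closedN adj).
Local Notation solo_play := (play (solo k sig)).

Lemma solo_round (s : State) y t : s.2 = robber -> t <= N.-1 ->
  let q := solo_play (move_to s y) t in
  [/\ val q.2 = t, forall c, c != k -> q.1 c = (move_to s y).1 c,
      closedN (s.1 k) (q.1 k) & t <= val k -> q.1 k = s.1 k].
Proof.
move=> s_rob; elim: t => [_|t IH lt_t] q; rewrite {}/q.
  change (solo_play (move_to s y) 0) with (move_to s y).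
  have sk : (move_to s y).1 k = s.1 k by rewrite move_toE s_rob (negbTE cop_k).
  by rewrite sk /= s_rob nextTok_robber; split=> //; apply: closedN_refl.
have [q2 q_others q_k q_k_before] := IH (ltnW lt_t).
set q := solo_play _ t in q2 q_others q_k q_k_before *.
have q_nrob : q.2 != robber by apply/eqP => q_rob; move: lt_t; rewrite -q2 q_rob ltnn.
rewrite playSr step_move_to; split.
- by rewrite /= val_nextTok // q2.
- move=> c c_k; rewrite move_toE; case: eqP => [c_q|_]; last exact: q_others.
  by rewrite /solo -c_q (negbTE c_k) q_others.
- rewrite move_toE; case: eqP => [k_q|_] //; rewrite /solo -k_q eqxx.
  by have := sig_valid q.1; rewrite q_k_before // -q2 -k_q.
- move=> le_t1_k; rewrite move_toE; case: eqP => [k_q|_]; last exact/q_k_before/ltnW.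
  by move: le_t1_k; rewrite k_q q2 ltnn.
Qed.

Definition robber_on_leaves (s : State) : Prop :=
  forall t, (forall t', t' <= t -> noncapture (solo_play s t')) ->
    (solo_play s t).2 = robber -> leafy adj ((solo_play s t).1 robber).

Lemma robber_move_options (s : State) : s.2 = robber ->
  (forall s', legal_step adj s s' -> robber_on_leaves s') ->
  forall y, closedN (s.1 robber) y ->
  [\/ exists2 c, is_cop c & s.1 c = y, closedN (s.1 k) y | leafy adj y].
Proof.
move=> s_rob leaves y s_y.
have rob_y t : t <= N.-1 -> (solo_play (move_to s y) t).1 robber = y.
  move=> le_t; have [_ q_others _ _] := solo_round y s_rob le_t.
  by rewrite q_others 1?eq_sym // move_toE s_rob eqxx.
case: (classic (exists2 t, t <= N.-1 & is_capture (solo_play (move_to s y) t))) =>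
    [[t le_t]|no_cap].
  case/captureP=> c cop_c; rewrite rob_y //.
  have [_ q_others q_k _] := solo_round y s_rob le_t.
  case: (eqVneq c k) => [-> <-|c_k]; first exact: Or32.
  by rewrite q_others // move_toE s_rob (negbTE cop_c) => s_c; apply: Or31; exists c.
apply: Or33; rewrite -(rob_y N.-1) //.
apply: (leaves _ (legal_move_to _)); first by rewrite s_rob.
- by move=> t' le_t'; apply/negP => cap; apply: no_cap; exists t'.
- by apply: val_inj; have [-> _ _ _] := solo_round y s_rob (leqnn N.-1).
Qed.

End SoloRound.

Section Leaves.
Variables (N : nat) (V : finType) (adj : rel V) (R : realFieldType) (gamma : R).
Hypotheses (three_tokens : 2 < N) (adj_sym : symmetric adj) (adj_irr : irreflexive adj).
Hypothesis gamma01 : (0 < gamma < 1)%R.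
Hypothesis sure_at_scn1 :
  forall s : State N V, noncapture s -> scn_eq adj s 1 -> sure_capture adj gamma s.
Local Notation State := (State N V).
Local Notation Tok := (Tok N).
Local Notation robber := (robber N).
Local Notation closedN := (closedN adj).

Let cops_exist : 0 < N.-1.
Proof. by case: N three_tokens => [|[]]. Qed.

Let c0 : Tok := ord0.
Let c1 : Tok := inord 1.

Let c0_cop : is_cop c0.
Proof. exact: ord0_cop. Qed.

Let c1_val : val c1 = 1.
Proof. by rewrite /= inordK // ltnS. Qed.

Let c1_cop : is_cop c1.
Proof. by rewrite /is_cop -val_eqE c1_val /=; case: N three_tokens => [|[|[]]]. Qed.

Let c1_neq_c0 : c1 != c0.
Proof. by rewrite -val_eqE c1_val. Qed.

Lemma adj_closedN a b : adj a b -> closedN a b.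
Proof. by rewrite /Defs.closedN => ->; rewrite orbT. Qed.

Lemma closedN_adj a b : closedN a b -> b != a -> adj a b.
Proof. by case/orP=> [->|]. Qed.

Definition chase (c : Tok) (u : V) : strat N V := fun p =>
  if closedN (p c) (p robber) then p robber else if closedN (p c) u then u else p c.

Lemma chase_valid c u : valid_strat adj c (chase c u).
Proof. by move=> p; rewrite /chase; do 2!case: ifP => //; rewrite closedN_refl. Qed.

Lemma chase_captures (q : State) c u : is_cop c -> q.2 = c ->
  closedN (q.1 c) (q.1 robber) -> is_capture (move_to q (chase c u q.1)).
Proof.
move=> cop_c q_c q_rob; apply/captureP; exists c; rewrite // /chase q_rob !move_toE q_c eqxx.
by rewrite eq_sym (negbTE cop_c).
Qed.

Lemma chase_wins_at_leaf u y (r : State) : adj u y -> leafy adj y ->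
  r.2 = robber -> r.1 c0 = u -> r.1 robber = y -> wins adj c0 (chase c0 u) r.
Proof.
move=> adj_uy leafy_y r_rob r_c0 r_y.
case: (boolP (is_capture r)) => [|r_nc]; first exact: wins_capture.
apply: wins_other => // [r_c0'|r' r_r'].
  by move: c0_cop; rewrite /is_cop -r_c0' r_rob eqxx.
rewrite (legal_stepE r_r'); set y' := r'.1 r.2.
have r_rob_c0 : (c0 == r.2) = false by rewrite r_rob; apply/negbTE.
case: (boolP (is_capture (move_to r y'))) => [|nc]; first exact: wins_capture.
have y'_y : y' = y.
  have [_ _] := r_r'; rewrite -/y' r_rob r_y => /orP[/eqP //|adj_yy'].
  case/negP: nc; apply/captureP; exists c0; rewrite // !move_toE r_rob_c0 r_rob eqxx r_c0.
  by rewrite -(leafy_y _ _ adj_yy' (_ : adj y u)) // adj_sym.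
apply: wins_move => //; first by rewrite /= r_rob nextTok_robber.
apply/wins_capture/chase_captures => //; first by rewrite /= r_rob nextTok_robber.
by rewrite !move_toE r_rob_c0 r_rob eqxx r_c0 y'_y adj_closedN.
Qed.

Lemma chase_wins_near_leaf u y (q : State) : adj u y -> leafy adj y ->
  q.1 c0 = u -> q.1 robber = y -> q.2 != c0 -> wins adj c0 (chase c0 u) q.
Proof.
move=> adj_uy leafy_y; move: q.
suff measure_ind d (q : State) : N.-1 - val q.2 = d ->
    q.1 c0 = u -> q.1 robber = y -> q.2 != c0 -> wins adj c0 (chase c0 u) q.
  by move=> q; apply: measure_ind.
elim: d q => [|d IH] q q_d q_c0 q_y q_nc0.
  apply: (chase_wins_at_leaf adj_uy leafy_y) => //; apply/val_inj/eqP.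
  by rewrite eqn_leq leq_ord -subn_eq0 q_d.
case: (boolP (is_capture q)) => [|q_nc]; first exact: wins_capture.
have [q_rob|q_nrob] := eqVneq q.2 robber; first exact: (chase_wins_at_leaf adj_uy leafy_y).
apply: wins_other => // [/eqP|q' q_q']; first by rewrite (negbTE q_nc0).
rewrite (legal_stepE q_q'); apply: IH; rewrite //= ?move_toE.
- by rewrite val_nextTok // subnS q_d.
- by rewrite eq_sym (negbTE q_nc0).
- by rewrite eq_sym (negbTE q_nrob).
- by rewrite -val_eqE /= val_nextTok.
Qed.

Definition hub_state (u x w : V) : State :=
  ([ffun i => if i == robber then u else if i == c1 then w else x], robber).

Lemma hub_state_noncapture u x w : adj u x -> adj u w -> noncapture (hub_state u x w).
Proof.
move=> adj_ux adj_uw; apply/captureP => -[c /negbTE cop_c]; rewrite /= !ffunE eqxx cop_c.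
by case: ifP => _ eq_u; [move: adj_uw | move: adj_ux]; rewrite eq_u adj_irr.
Qed.

Lemma chase_wins_hub u x w : adj u x -> adj u w ->
  (forall y, adj u y -> closedN x y \/ leafy adj y) ->
  wins adj c0 (chase c0 u) (hub_state u x w).
Proof.
move=> adj_ux adj_uw hub; set s := hub_state u x w.
have c0_nrob : (c0 == robber) = false by apply/negbTE.
apply: wins_other; first exact: hub_state_noncapture.
  by move=> rob_c0; move: c0_cop; rewrite -rob_c0 /is_cop eqxx.
move=> s' s_s'; rewrite (legal_stepE s_s'); set y := s'.1 s.2.
have u_y : closedN u y by have [_ _] := s_s'; rewrite /= ffunE eqxx.
case: (boolP (is_capture (move_to s y))) => [|nc]; first exact: wins_capture.
have next_c0 : (c0 == (move_to s y).2) = true by rewrite /= nextTok_robber.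
have y_c0 : (move_to s y).1 c0 = x.
  by rewrite move_toE /= c0_nrob ffunE c0_nrob eq_sym (negbTE c1_neq_c0).
have y_rob : (move_to s y).1 robber = y by rewrite move_toE eqxx.
apply: wins_move => //; first exact/esym/eqP.
have [x_y|x_ny] := boolP (closedN x y).
  by apply/wins_capture/chase_captures; [|exact/esym/eqP|rewrite y_c0 y_rob].
have y_nu : y != u by apply: contraNneq x_ny => ->; apply: adj_closedN; rewrite adj_sym.
have leafy_y : leafy adj y by case: (hub y (closedN_adj u_y y_nu)) x_ny => // ->.
apply: (chase_wins_near_leaf (closedN_adj u_y y_nu) leafy_y).
- rewrite move_toE next_c0 /chase y_c0 y_rob (negbTE x_ny).
  by rewrite adj_closedN // adj_sym.
- by rewrite move_toE -(eqP next_c0) eq_sym c0_nrob.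
- by rewrite /= nextTok_robber -val_eqE /= val_nextTok.
Qed.

Lemma only_neighbour_of_hub u x : adj u x ->
  (forall y, adj u y -> closedN x y \/ leafy adj y) -> forall w, adj u w -> w = x.
Proof.
move=> adj_ux hub w adj_uw.
have force1 : force adj (hub_state u x w) 1.
  apply/force1P; exists c0, (chase c0 u); split=> //; first exact: chase_valid.
  exact: chase_wins_hub.
have := adjacent_cops_coincide gamma01 cops_exist sure_at_scn1 (s := hub_state u x w) erefl
  (hub_state_noncapture adj_ux adj_uw) force1 c1_cop c0_cop.
rewrite /= !ffunE eqxx (negbTE c0_cop) (negbTE c1_cop) eqxx eq_sym (negbTE c1_neq_c0).
by apply.
Qed.

Lemma leafy_of_robber_move_options (s : State) k : s.2 = robber -> noncapture s ->
  force adj s 1 -> is_cop k ->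
  (forall y, closedN (s.1 robber) y ->
    [\/ exists2 c, is_cop c & s.1 c = y, closedN (s.1 k) y | leafy adj y]) ->
  leafy adj (s.1 robber).
Proof.
move=> s_rob s_nc force1 cop_k options; set u := s.1 robber; set x := s.1 k.
have x_nu : x != u by apply: contraNneq s_nc => x_u; apply/captureP; exists k.
have [[c cop_c c_u]|x_u|//] := options u (closedN_refl adj u).
  by case/negP: s_nc; apply/captureP; exists c.
have adj_ux : adj u x by rewrite adj_sym; apply: closedN_adj; rewrite // eq_sym.
have hub y : adj u y -> closedN x y \/ leafy adj y.
  move=> adj_uy; have [[c cop_c c_y]|x_y|leafy_y] := options y (adj_closedN adj_uy).
  - left; rewrite -c_y (adjacent_cops_coincide gamma01 cops_exist sure_at_scn1 s_rob s_nc
      force1 cop_c cop_k) ?c_y //; exact: closedN_refl.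
  - by left.
  - by right.
by move=> a b /(only_neighbour_of_hub adj_ux hub) -> /(only_neighbour_of_hub adj_ux hub) ->.
Qed.

Lemma wins_robber_on_leaves k sig (s : State) : is_cop k -> valid_strat adj k sig ->
  wins adj k sig s -> robber_on_leaves adj k sig s.
Proof.
move=> cop_k sig_valid; elim=> {s} [s cap|s s_nc s_k _ IH|s s_nc s_nk win IH] [|t] nc rob.
- by case/negP: (nc 0 isT).
- by case/negP: (nc 0 isT).
- by move: cop_k; rewrite /is_cop -s_k rob eqxx.
- move: nc rob; rewrite playS step_move_to /solo s_k eqxx => nc rob.
  by apply: IH rob => t' le_t'; move: (nc t'.+1 le_t'); rewrite playS step_move_to /solo s_k eqxx.
- change (s.2 = robber) in rob; change (leafy adj (s.1 robber)).
  have force1 : force adj s 1.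
    by apply/force1P; exists k, sig; split=> //; apply: wins_other.
  apply: (leafy_of_robber_move_options rob (nc 0 isT) force1 cop_k).
  exact: (robber_move_options cop_k sig_valid rob IH).
- have stay : solo k sig s.2 s.1 = s.1 s.2 by rewrite /solo; case: eqP.
  move: nc rob; rewrite playS step_move_to stay => nc rob.
  apply: (IH _ (legal_move_to (closedN_refl adj _)) t _ rob) => t' le_t'.
  by move: (nc t'.+1 le_t'); rewrite playS step_move_to stay.
Qed.

Lemma leafy_of_force1 (s : State) : s.2 = robber -> noncapture s -> force adj s 1 ->
  leafy adj (s.1 robber).
Proof.
move=> s_rob s_nc /force1P[k [sig [cop_k sig_valid win]]].
by apply: (wins_robber_on_leaves cop_k sig_valid win (t := 0)) => // t; rewrite leqn0 => /eqP ->.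
Qed.

End Leaves.

Lemma scn_eq_of_force (N : nat) (V : finType) (adj : rel V) (s : State N V) k :
  0 < k <= N.-1 -> force adj s k -> exists2 j, j <= k & scn_eq adj s j.
Proof.
elim/ltn_ind: k => k IH /andP[k_gt0 k_le] force_k.
case: (classic (exists2 j, 0 < j < k & force adj s j)) => [[j /andP[j_gt0 j_lt] force_j]|none].
  have [|i i_le scn_i] := IH j j_lt _ force_j; first by rewrite j_gt0 (leq_trans (ltnW j_lt)).
  by exists i; rewrite // (leq_trans i_le (ltnW j_lt)).
by exists k => //; split=> [|//|j j_range force_j]; [rewrite k_gt0 | apply: none; exists j].
Qed.

Lemma scn_inf_of_not_force1 (N : nat) (V : finType) (adj : rel V) (s : State N V) :
  in_G1' N adj -> noncapture s -> ~ force adj s 1 -> scn_inf adj s.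
Proof.
move=> [inG notG1] s_nc no_force1 k k_range force_k.
have [j _ scn_j] := scn_eq_of_force k_range force_k.
have [/andP[j_gt0 _] force_j _] := scn_j.
case: j j_gt0 force_j scn_j => [//|[_ /no_force1 //|j _ _ scn_j]].
by apply: notG1; split=> //; exists s; split=> //; exists j.+2.
Qed.

Lemma card_neighbours_leafy (V : finType) (adj : rel V) u w :
  (forall x y, connect adj x y) -> leafy adj u -> w != u -> #|[set v | adj u v]| = 1.
Proof.
move=> conn leafy_u w_nu.
case/connectP: (conn u w) => [[|a p] /= path_uw w_last]; first by rewrite w_last eqxx in w_nu.
case/andP: path_uw => adj_ua _.
suff -> : [set v | adj u v] = [set a] by apply: cards1.
by apply/setP => v; rewrite !inE; apply/idP/eqP => [adj_uv|->] //; apply: leafy_u adj_uv adj_ua.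
Qed.

Lemma cops_win_leaf_edge (V : finType) (adj : rel V) u v : symmetric adj ->
  (forall x y, connect adj x y) -> adj u v -> leafy adj u -> leafy adj v ->
  classical_cops_win adj 1.
Proof.
move=> adj_sym conn adj_uv leafy_u leafy_v.
have step a b : a = u \/ a = v -> adj a b -> b = u \/ b = v.
  case=> -> adj_ab; first by right; apply: leafy_u adj_ab adj_uv.
  by left; apply: (leafy_v _ _ adj_ab); rewrite adj_sym.
have uv_only z : z = u \/ z = v.
  suff reach p a : a = u \/ a = v -> path adj a p -> last a p = u \/ last a p = v.
    by case/connectP: (conn u z) => p path_p ->; apply: reach path_p; left.
  elim: p a => //= b p IH a a_uv /andP[adj_ab path_p].
  exact: IH (step a b a_uv adj_ab) path_p.
have closed_all a b : closedN adj a b.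
  rewrite /Defs.closedN; case: (uv_only a) (uv_only b) => -> [] ->;
  by rewrite ?eqxx ?adj_uv ?orbT // adj_sym adj_uv orbT.
exists [ffun=> u], (fun _ r => [ffun=> r]).
split=> [c r i|c r _ c_next _]; first exact: closed_all.
by exists 0, ord0; right; rewrite c_next ffunE.
Qed.

Theorem mainTheorem14 (N : nat) (V : finType) (adj : rel V)
    (R : realFieldType) (gamma : R) :
  3 <= N ->
  symmetric adj -> irreflexive adj -> (forall x y, connect adj x y) ->
  (0 < gamma < 1)%R ->
  in_G3 N adj gamma ->
  forall (p : Pos N V) (u : V),
    p (robber N) = u ->
    noncapture (p, robber N) ->
    scn_eq adj (p, robber N) 1 ->
    #|[set v | adj u v]| = 1 /\
    (forall v : V, [set w | adj u w] = [set v] ->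
       forall p' : Pos N V, p' (robber N) = v ->
         noncapture (p', robber N) -> scn_inf adj (p', robber N)).
Proof.
move=> three_tokens adj_sym adj_irr conn gamma01 [[G1' _] sure] p u p_u p_nc [_ force1 _].
have leafy_robber := leafy_of_force1 three_tokens adj_sym adj_irr gamma01 sure.
have leafy_u : leafy adj u by rewrite -p_u; apply: (leafy_robber (p, robber N)).
split.
  apply: (card_neighbours_leafy conn leafy_u (w := p ord0)).
  apply: contraNneq p_nc => p0_u; apply/captureP; exists ord0; rewrite /= ?p0_u ?p_u //.
  exact: ord0_cop.
move=> v Nu_v p' p'_v p'_nc; apply: (scn_inf_of_not_force1 G1' p'_nc) => force1'.
have adj_uv : adj u v by have := set11 v; rewrite -Nu_v inE.
have leafy_v : leafy adj v by rewrite -p'_v; apply: (leafy_robber (p', robber N)).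
have [inG _] := G1'; apply: (inG 1); first by move: three_tokens; case: (N) => [|[]].
exact: cops_win_leaf_edge adj_sym conn adj_uv leafy_u leafy_v.
Qed.
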